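(* Let $(b,c)$ be a connected weighted graph over $X$ and consider: (A) $X$ is totally bounded with respect to $d$; (B) $X$ is totally bounded with respect to $\varrho$; (C) $X$ is totally bounded with respect to every metric $\sigma$ on $X$ which is intrinsic with respect to some measure $m$ with $m(X)<\infty$; (D) $\widetilde D\subseteq\ell^\infty(X)$. Then (A) $\Rightarrow$ (B) $\Rightarrow$ (D). If $c\equiv0$, then furthermore (B) $\Rightarrow$ (C) $\Rightarrow$ (D).
   Context: Let $X$ be a countably infinite set. A weighted graph $(b,c)$ over $X$ consists of a symmetric $b:X\times X\to[0,\infty)$ with $b(x,x)=0$ and $\sum_{y}b(x,y)<\infty$ for all $x$, and $c:X\to[0,\infty)$. A path is a finite sequence $(x_0,\dots,x_n)$ of pairwise distinct vertices with $b(x_{i-1},x_i)>0$; connected means any two distinct vertices are joined by a path. For $f:X\to\mathbb C$ let $\widetilde Q(f)=\frac12\sum_{x,y}b(x,y)|f(x)-f(y)|^2+\sum_x c(x)|f(x)|^2$ and $\widetilde D=\{f:\widetilde Q(f)<\infty\}$. Define $d(x,y)=\inf\{\sum_{i=1}^n1/b(x_{i-1},x_i):(x_0,\dots,x_n)\text{ a path from }x\text{ to }y\}$ ($d(x,x)=0$) and $\varrho(x,y)=\sup\{|f(x)-f(y)|:f\in\widetilde D,\widetilde Q(f)\le1\}$. A measure on $X$ is $m:X\to[0,\infty)$ with $m(A)=\sum_{x\in A}m(x)$; a metric $\sigma$ is intrinsic with respect to $m$ if $\frac12\sum_y b(x,y)\sigma(x,y)^2\le m(x)$ for all $x$. *)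

From Stdlib Require Import Reals Lra List Classical ClassicalEpsilon.
Import ListNotations.
Open Scope R_scope.

(* Supremum / infimum of a set of reals (meaningful when it exists). *)
Definition Rsup (E : R -> Prop) : R := epsilon (inhabits 0) (fun s => is_lub E s).
Definition Rinf (E : R -> Prop) : R := - Rsup (fun r => E (- r)).

(* Complex numbers as pairs (real part, imaginary part). *)
Definition Cx := (R * R)%type.
Definition Cminus (u v : Cx) : Cx := (fst u - fst v, snd u - snd v).
Definition Cabs2 (u : Cx) : R := fst u * fst u + snd u * snd u.
Definition Cmod (u : Cx) : R := sqrt (Cabs2 u).

(* Unordered sums of nonnegative families over a (countable) type:
   partial sums over finite subsets (duplicate-free lists). *)
Definition fsum {T : Type} (g : T -> R) (l : list T) : R :=
  fold_right Rplus 0 (map g l).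
Definition partial_sums {T : Type} (g : T -> R) (s : R) : Prop :=
  exists l : list T, NoDup l /\ s = fsum g l.
Definition nnsum_finite {T : Type} (g : T -> R) : Prop :=
  exists M, forall s, partial_sums g s -> s <= M.
Definition nnsum {T : Type} (g : T -> R) : R := Rsup (partial_sums g).

Definition countably_infinite (X : Type) : Prop :=
  exists e : nat -> X, (forall n m, e n = e m -> n = m) /\ (forall x, exists n, e n = x).

Definition weighted_graph {X : Type} (b : X -> X -> R) (c : X -> R) : Prop :=
  (forall x y, 0 <= b x y) /\ (forall x y, b x y = b y x) /\ (forall x, b x x = 0) /\
  (forall x, nnsum_finite (b x)) /\ (forall x, 0 <= c x).

Fixpoint edges_pos {X : Type} (b : X -> X -> R) (x : X) (l : list X) : Prop :=
  match l with
  | [] => True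
  | y :: l' => 0 < b x y /\ edges_pos b y l'
  end.

Definition is_path {X : Type} (b : X -> X -> R) (x : X) (l : list X) (y : X) : Prop :=
  NoDup (x :: l) /\ edges_pos b x l /\ last l x = y.

Fixpoint path_cost {X : Type} (b : X -> X -> R) (x : X) (l : list X) : R :=
  match l with
  | [] => 0
  | y :: l' => / b x y + path_cost b y l'
  end.

Definition connected {X : Type} (b : X -> X -> R) : Prop :=
  forall x y, x <> y -> exists l, is_path b x l y.

(* d(x,y) = inf over paths of sum 1/b; the trivial path gives d(x,x) = 0 *)
Definition dist_d {X : Type} (b : X -> X -> R) (x y : X) : R :=
  Rinf (fun r => exists l, is_path b x l y /\ r = path_cost b x l).

(* the two nonnegative families making up Q~(f) *)
Definition Q_edge {X : Type} (b : X -> X -> R) (f : X -> Cx) (p : X * X) : R :=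
  b (fst p) (snd p) * Cabs2 (Cminus (f (fst p)) (f (snd p))).
Definition Q_pot {X : Type} (c : X -> R) (f : X -> Cx) (x : X) : R :=
  c x * Cabs2 (f x).

Definition in_Dt {X : Type} (b : X -> X -> R) (c : X -> R) (f : X -> Cx) : Prop :=
  nnsum_finite (Q_edge b f) /\ nnsum_finite (Q_pot c f).

Definition Qt {X : Type} (b : X -> X -> R) (c : X -> R) (f : X -> Cx) : R :=
  / 2 * nnsum (Q_edge b f) + nnsum (Q_pot c f).

Definition dist_rho {X : Type} (b : X -> X -> R) (c : X -> R) (x y : X) : R :=
  Rsup (fun r => exists f, in_Dt b c f /\ Qt b c f <= 1 /\ r = Cmod (Cminus (f x) (f y))).

Definition is_metric {X : Type} (s : X -> X -> R) : Prop :=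
  (forall x y, 0 <= s x y) /\ (forall x y, s x y = 0 <-> x = y) /\
  (forall x y, s x y = s y x) /\ (forall x y z, s x z <= s x y + s y z).

Definition is_measure {X : Type} (m : X -> R) : Prop := forall x, 0 <= m x.

Definition finite_measure {X : Type} (m : X -> R) : Prop := nnsum_finite m.

Definition intrinsic {X : Type} (b : X -> X -> R) (m : X -> R) (s : X -> X -> R) : Prop :=
  forall x, nnsum_finite (fun y => b x y * (s x y) ^ 2) /\
            / 2 * nnsum (fun y => b x y * (s x y) ^ 2) <= m x.

Definition totally_bounded {X : Type} (s : X -> X -> R) : Prop :=
  forall eps, 0 < eps -> exists F : list X, forall x, exists y, In y F /\ s x y < eps.

Definition bounded_fun {X : Type} (f : X -> Cx) : Prop :=
  exists M, forall x, Cmod (f x) <= M.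

From Stdlib Require Import Reals List Lra Lia Psatz FinFun Classical ClassicalEpsilon.
From Coquelicot Require Complex.
Import ListNotations.
Open Scope R_scope.

(* The key estimate is an AM-GM bound along paths: for a function f of energy
   Q~(f) <= 1 and any path from x to y, |f x - f y| <= t + cost/(2t) for all t > 0
   ([diff_le_path]); hence rho is controlled by the path metric d and (A) => (B).
   Rescaling shows that every f in D~ satisfies |f x - f y| <= sqrt(Q~ f) rho(x, y)
   ([diff_le_rho]); a 1-net for rho then bounds f, giving (B) => (D).
   For c = 0, the distance z |-> s(z, y) to a point, for s intrinsic w.r.t. a
   finite measure m, has energy at most m(X) ([intrinsic_distance_energy]), so s is
   dominated by a multiple of rho and (B) => (C).  For (C) => (D), f in D~ is fed to
   (C) through the metric |f x - f y| + w(x) + w(y) (x <> y), where the positive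
   weights w come from an enumeration of X; its energy is summable, so it is
   intrinsic w.r.t. a finite measure ([intrinsic_measure_of_energy]). *)

Lemma Rsup_lub (E : R -> Prop) :
  (exists s, E s) -> (exists M, forall s, E s -> s <= M) -> is_lub E (Rsup E).
Proof.
  intros Hne [M HM]. unfold Rsup. apply epsilon_spec.
  destruct (completeness E) as [m Hm]; [exists M; exact HM | exact Hne | exists m; exact Hm].
Qed.

Lemma Rsup_ub (E : R -> Prop) s :
  E s -> (exists M, forall s, E s -> s <= M) -> s <= Rsup E.
Proof. intros Hs HM. apply (Rsup_lub E (ex_intro _ s Hs) HM); exact Hs. Qed.

Lemma Rsup_le (E : R -> Prop) M :
  (exists s, E s) -> (forall s, E s -> s <= M) -> Rsup E <= M.
Proof. intros Hne HM. apply (Rsup_lub E Hne (ex_intro _ M HM)); exact HM. Qed.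

Section FiniteSums.
Context {T : Type}.
Implicit Types (g h : T -> R) (l : list T).

Lemma fsum_cons g a l : fsum g (a :: l) = g a + fsum g l.
Proof. reflexivity. Qed.

Lemma fsum_app g l1 l2 : fsum g (l1 ++ l2) = fsum g l1 + fsum g l2.
Proof. induction l1 as [|a l1 IH]; simpl app; rewrite ?fsum_cons, ?IH; cbn; ring. Qed.

Lemma fsum_le g h l : (forall p, g p <= h p) -> fsum g l <= fsum h l.
Proof. intros H; induction l as [|a l IH]; rewrite ?fsum_cons; [cbn; lra | specialize (H a); lra]. Qed.

Lemma fsum_scal g k l : fsum (fun p => k * g p) l = k * fsum g l.
Proof. induction l as [|a l IH]; rewrite ?fsum_cons, ?IH; cbn; ring. Qed.

Lemma fsum_plus g h l : fsum (fun p => g p + h p) l = fsum g l + fsum h l.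
Proof. induction l as [|a l IH]; rewrite ?fsum_cons, ?IH; cbn; ring. Qed.

Lemma fsum_nonneg g l : (forall p, 0 <= g p) -> 0 <= fsum g l.
Proof. intros H; induction l as [|a l IH]; rewrite ?fsum_cons; [cbn; lra | specialize (H a); lra]. Qed.

Lemma fsum_nonpos g l : (forall p, g p <= 0) -> fsum g l <= 0.
Proof. intros H; induction l as [|a l IH]; rewrite ?fsum_cons; [cbn; lra | specialize (H a); lra]. Qed.

Lemma fsum_In g l a : (forall p, 0 <= g p) -> In a l -> g a <= fsum g l.
Proof.
  intros H Hin; induction l as [|x l IH]; [destruct Hin|].
  rewrite fsum_cons; destruct Hin as [<-|Hin].
  - pose proof (fsum_nonneg g l H); lra.
  - specialize (IH Hin); specialize (H x); lra.
Qed.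

Lemma fsum_incl g l l' : (forall p, 0 <= g p) -> NoDup l -> incl l l' -> fsum g l <= fsum g l'.
Proof.
  intros Hg Hl; revert l'; induction Hl as [|a l Ha Hl IH]; intros l' Hinc.
  - apply fsum_nonneg; exact Hg.
  - destruct (in_split a l') as [l1 [l2 ->]]; [apply Hinc; left; reflexivity|].
    assert (Hsub : incl l (l1 ++ l2)).
    { intros z Hz. assert (Hz' : In z (l1 ++ a :: l2)) by (apply Hinc; right; exact Hz).
      apply in_app_or in Hz'; apply in_or_app; destruct Hz' as [?|[<-|?]]; auto; contradiction. }
    specialize (IH _ Hsub). rewrite fsum_app in IH. rewrite fsum_cons, fsum_app, fsum_cons. lra.
Qed.

Lemma fsum_filter g (P : T -> bool) l :
  fsum g l = fsum g (filter P l) + fsum g (filter (fun p => negb (P p)) l).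
Proof.
  induction l as [|a l IH]; [cbn; ring|].
  simpl; destruct (P a); simpl; rewrite !fsum_cons, IH; ring.
Qed.

End FiniteSums.

Lemma fsum_map {T U : Type} (g : U -> R) (f : T -> U) (l : list T) :
  fsum g (map f l) = fsum (fun x => g (f x)) l.
Proof. induction l as [|a l IH]; [reflexivity|]. cbn [map]; rewrite (fsum_cons g), fsum_cons, IH; reflexivity. Qed.

Section UnorderedSums.
Context {T : Type}.
Implicit Types (g h : T -> R) (l : list T).

Lemma nnsum_ge g l : nnsum_finite g -> NoDup l -> fsum g l <= nnsum g.
Proof.
  intros [M HM] Hl. apply Rsup_ub; [exists l; auto | exists M; exact HM].
Qed.

Lemma nnsum_le g M : (forall l, NoDup l -> fsum g l <= M) -> nnsum g <= M.
Proof.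
  intros H. apply Rsup_le; [exists 0, []; split; [constructor | reflexivity] |].
  intros s [l [Hl ->]]; auto.
Qed.

Lemma nnsum_finite_of_bound g M : (forall l, NoDup l -> fsum g l <= M) -> nnsum_finite g.
Proof. intros H; exists M; intros s [l [Hl ->]]; auto. Qed.

Lemma nnsum_nonneg g : nnsum_finite g -> 0 <= nnsum g.
Proof. intros H. apply (nnsum_ge g []); [exact H | constructor]. Qed.

Lemma fsum_le_scaled_nnsum g h k :
  (forall p, h p <= k * g p) -> 0 <= k -> nnsum_finite g ->
  forall l, NoDup l -> fsum h l <= k * nnsum g.
Proof.
  intros H Hk Hg l Hl. eapply Rle_trans; [apply (fsum_le _ _ l H)|].
  rewrite fsum_scal. apply Rmult_le_compat_l; [exact Hk | apply nnsum_ge; auto].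
Qed.

End UnorderedSums.

Section PairSums.
Context {X : Type} (G : X * X -> R).

Definition row_filter (a : X) (p : X * X) : bool :=
  if excluded_middle_informative (fst p = a) then true else false.

(* A [NoDup] list of pairs whose first coordinates lie in [xs] splits into
   rows, each of which is bounded by its row sum. *)
Lemma pair_sum_le_rows_on (H : X -> R) :
  (forall p, 0 <= G p) -> (forall x, nnsum_finite (fun y => G (x, y))) ->
  (forall x, nnsum (fun y => G (x, y)) <= H x) ->
  forall xs, NoDup xs -> forall L, NoDup L -> (forall p, In p L -> In (fst p) xs) ->
  fsum G L <= fsum H xs.
Proof.
  intros HG Hfin HH xs Hxs; induction Hxs as [|a xs Ha Hxs IH]; intros L HL Hf.
  - destruct L as [|p L]; [cbn; lra | destruct (Hf p (or_introl eq_refl))].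
  - rewrite (fsum_filter G (row_filter a) L), fsum_cons.
    set (La := filter (row_filter a) L).
    assert (HLa : forall p, In p La -> fst p = a).
    { intros p Hp. apply filter_In in Hp as [_ Hp]. unfold row_filter in Hp.
      destruct (excluded_middle_informative (fst p = a)); [assumption | discriminate]. }
    assert (Erow : La = map (pair a) (map snd La)).
    { rewrite map_map. clearbody La. induction La as [|[p1 p2] La IHa]; [reflexivity|].
      simpl. rewrite <- IHa by (intros; apply HLa; right; auto).
      pose proof (HLa (p1, p2) (or_introl eq_refl)) as Hp1; cbn in Hp1. now subst. }
    assert (Hrow : fsum G La <= H a).
    { assert (HnLa : NoDup (map snd La)).
      { apply NoDup_map_inv with (f := pair a). rewrite <- Erow. apply NoDup_filter; exact HL. }
      rewrite Erow, fsum_map. eapply Rle_trans; [|apply HH]. apply nnsum_ge; auto. }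
    assert (Hrest : fsum G (filter (fun p => negb (row_filter a p)) L) <= fsum H xs).
    { apply IH; [apply NoDup_filter; exact HL|].
      intros p Hp. apply filter_In in Hp as [Hp Hq]. unfold row_filter in Hq.
      destruct (excluded_middle_informative (fst p = a)); [discriminate|].
      destruct (Hf p Hp); [congruence | assumption]. }
    lra.
Qed.

Lemma pair_sum_le_rows (H : X -> R) M :
  (forall p, 0 <= G p) -> (forall x, nnsum_finite (fun y => G (x, y))) ->
  (forall x, nnsum (fun y => G (x, y)) <= H x) ->
  (forall xs, NoDup xs -> fsum H xs <= M) ->
  forall L, NoDup L -> fsum G L <= M.
Proof.
  intros HG Hfin HH HM L HL.
  set (dec := fun a b : X => excluded_middle_informative (a = b)).
  set (xs := nodup dec (map fst L)).
  eapply Rle_trans; [|apply (HM xs), NoDup_nodup].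
  apply pair_sum_le_rows_on; auto; [apply NoDup_nodup|].
  intros p Hp. apply nodup_In, in_map; exact Hp.
Qed.

(* Invariant of the induction: the completed row sums of [xs] plus the pairs
   [L0] outside these rows still form a partial sum of [G]. *)
Lemma rows_le_pair_sum_on M : (forall L, NoDup L -> fsum G L <= M) ->
  forall xs, NoDup xs -> forall L0, NoDup L0 -> (forall p, In p L0 -> ~ In (fst p) xs) ->
  fsum (fun x => nnsum (fun y => G (x, y))) xs + fsum G L0 <= M.
Proof.
  intros HM xs Hxs; induction Hxs as [|a xs Ha Hxs IH]; intros L0 HL0 Hf.
  - specialize (HM _ HL0). cbn; lra.
  - rewrite fsum_cons.
    enough (nnsum (fun y => G (a, y)) <= M - fsum (fun x => nnsum (fun y => G (x, y))) xs - fsum G L0)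
      by lra.
    apply nnsum_le. intros ys Hys.
    assert (HN : NoDup (map (pair a) ys ++ L0)).
    { apply NoDup_app; auto.
      - apply Injective_map_NoDup; [intros u v Huv; injection Huv; auto | exact Hys].
      - intros p Hp Hp'. apply in_map_iff in Hp as [y [<- _]].
        apply (Hf _ Hp'); left; reflexivity. }
    assert (HF : forall p, In p (map (pair a) ys ++ L0) -> ~ In (fst p) xs).
    { intros p Hp. apply in_app_or in Hp as [Hp|Hp].
      - apply in_map_iff in Hp as [y [<- _]]. exact Ha.
      - intros Hin; apply (Hf _ Hp); right; exact Hin. }
    specialize (IH _ HN HF). rewrite fsum_app, fsum_map in IH. lra.
Qed.

Lemma rows_le_pair_sum M : (forall L, NoDup L -> fsum G L <= M) ->
  (forall x ys, NoDup ys -> fsum (fun y => G (x, y)) ys <= M) /\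
  (forall xs, NoDup xs -> fsum (fun x => nnsum (fun y => G (x, y))) xs <= M).
Proof.
  intros HM. split.
  - intros x ys Hys. rewrite <- fsum_map. apply HM.
    apply Injective_map_NoDup; [intros u v Huv; injection Huv; auto | exact Hys].
  - intros xs Hxs.
    pose proof (rows_le_pair_sum_on M HM xs Hxs [] (NoDup_nil _) (fun p H => match H with end)).
    cbn in *; lra.
Qed.

Lemma pair_sum_swap M : (forall L, NoDup L -> fsum G L <= M) ->
  forall L, NoDup L -> fsum (fun p => G (snd p, fst p)) L <= M.
Proof.
  intros HM L HL. rewrite <- (fsum_map G (fun p => (snd p, fst p))). apply HM.
  apply Injective_map_NoDup; [|exact HL].
  intros [u1 u2] [v1 v2] Huv; injection Huv; intros; subst; reflexivity.
Qed.

End PairSums.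

Lemma fsum_geom_seq k N :
  fsum (fun n => (/2)^n) (seq k N) = 2 * (/2)^k - 2 * (/2)^(k + N).
Proof.
  revert k; induction N as [|N IH]; intros k; cbn [seq].
  - rewrite Nat.add_0_r; cbn; ring.
  - rewrite fsum_cons, IH. replace (k + S N)%nat with (S k + N)%nat by lia.
    cbn [pow]; field.
Qed.

Lemma fsum_geom_le (l : list nat) : NoDup l -> fsum (fun n => (/2)^n) l <= 2.
Proof.
  intros Hl. apply Rle_trans with (fsum (fun n => (/2)^n) (seq 0 (S (list_max l)))).
  - apply fsum_incl; [intros p; apply pow_le; lra | exact Hl |].
    intros n Hn. apply in_seq. split; [lia|].
    assert (Hmax : Forall (fun k => (k <= list_max l)%nat) l) by (apply list_max_le; lia).
    rewrite Forall_forall in Hmax. specialize (Hmax n Hn). lia.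
  - rewrite fsum_geom_seq. pose proof (pow_le (/2) (0 + S (list_max l))). cbn [pow] in *. lra.
Qed.

(* The modulus of [Cx] agrees with Coquelicot's complex modulus, whose triangle
   inequality we reuse. *)
Lemma Cmod_Coquelicot (u : Cx) : Cmod u = Complex.Cmod u.
Proof. unfold Cmod, Cabs2, Complex.Cmod. f_equal; ring. Qed.

Lemma Cabs2_nonneg (u : Cx) : 0 <= Cabs2 u.
Proof. unfold Cabs2; nra. Qed.

Lemma Cmod_nonneg (u : Cx) : 0 <= Cmod u.
Proof. apply sqrt_pos. Qed.

Lemma Cmod_sq (u : Cx) : Cmod u * Cmod u = Cabs2 u.
Proof. apply sqrt_sqrt, Cabs2_nonneg. Qed.

Lemma Cmod_tri (u v w : Cx) : Cmod (Cminus u w) <= Cmod (Cminus u v) + Cmod (Cminus v w).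
Proof.
  rewrite !Cmod_Coquelicot.
  replace (Cminus u w) with (Complex.Cplus (Cminus u v) (Cminus v w))
    by (unfold Complex.Cplus, Cminus; cbn; f_equal; ring).
  apply Complex.Cmod_triangle.
Qed.

Lemma Cmod_diag (u : Cx) : Cmod (Cminus u u) = 0.
Proof. unfold Cmod, Cabs2, Cminus; cbn. replace (_ + _) with 0 by ring. apply sqrt_0. Qed.

Lemma Cmod_sym (u v : Cx) : Cmod (Cminus u v) = Cmod (Cminus v u).
Proof. unfold Cmod, Cabs2, Cminus; cbn. f_equal; ring. Qed.

Lemma Cmod_le_diff (u v : Cx) : Cmod u <= Cmod v + Cmod (Cminus u v).
Proof.
  pose proof (Cmod_tri u v (0, 0)) as Htri.
  assert (E : forall z : Cx, Cmod (Cminus z (0, 0)) = Cmod z)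
    by (intros z; unfold Cmod, Cabs2, Cminus; cbn; f_equal; ring).
  rewrite !E in Htri. lra.
Qed.

Lemma Cmod_real (a a' : R) : Cmod (Cminus (a, 0) (a', 0)) = Rabs (a - a').
Proof. unfold Cmod, Cabs2, Cminus; cbn. rewrite <- sqrt_Rsqr_abs. unfold Rsqr. f_equal; ring. Qed.

(* A function is bounded as soon as its oscillation is dominated by a totally
   bounded (pseudo)distance: compare with the finitely many centres of a 1-net. *)
Lemma bounded_of_totally_bounded {X : Type} (s : X -> X -> R) (f : X -> Cx) K :
  0 <= K -> (forall x y, Cmod (Cminus (f x) (f y)) <= K * s x y) -> totally_bounded s ->
  bounded_fun f.
Proof.
  intros HK Hf Hs. destruct (Hs 1 Rlt_0_1) as [F HF].
  exists (fsum (fun y => Cmod (f y)) F + K). intros x.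
  destruct (HF x) as [y [Hy Hxy]].
  pose proof (Cmod_le_diff (f x) (f y)).
  pose proof (fsum_In (fun y => Cmod (f y)) F y (fun p => Cmod_nonneg _) Hy).
  pose proof (Hf x y). assert (K * s x y <= K) by nra.
  cbn beta in *; lra.
Qed.

Lemma totally_bounded_dominated {X : Type} (s s' : X -> X -> R) k :
  0 < k -> (forall x y, s x y <= k * s' x y) -> totally_bounded s' -> totally_bounded s.
Proof.
  intros Hk Hss' Hs' eps Heps. destruct (Hs' (eps / k)) as [F HF]; [apply Rdiv_lt_0_compat; auto|].
  exists F. intros x. destruct (HF x) as [y [Hy Hxy]]. exists y; split; [exact Hy|].
  eapply Rle_lt_trans; [apply Hss'|].
  apply Rmult_lt_compat_l with (r := k) in Hxy; [|exact Hk].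
  replace (k * (eps / k)) with eps in Hxy by (field; lra). exact Hxy.
Qed.

Section PathEstimates.
Context {X : Type} (b : X -> X -> R).

Fixpoint path_edges (x : X) (l : list X) : list (X * X) :=
  match l with [] => [] | y :: l' => (x, y) :: path_edges y l' end.

Lemma path_edges_fst (x : X) l p : In p (path_edges x l) -> In (fst p) (x :: l).
Proof.
  revert x; induction l as [|y l IH]; intros x Hp; [destruct Hp|].
  destruct Hp as [<-|Hp]; [left; reflexivity | right; apply IH; exact Hp].
Qed.

Lemma path_edges_NoDup (x : X) l : NoDup (x :: l) -> NoDup (path_edges x l).
Proof.
  revert x; induction l as [|y l IH]; intros x Hnd; cbn; [constructor|].
  inversion Hnd as [|? ? Hx Hnd']; subst. constructor; [|apply IH; exact Hnd'].
  intros Hin. apply path_edges_fst in Hin. exact (Hx Hin).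
Qed.

Lemma last_cons_default (y : X) l : forall x, last (y :: l) x = last l y.
Proof.
  revert y; induction l as [|z l IH]; intros y x; [reflexivity|].
  change (last (y :: z :: l) x) with (last (z :: l) x). rewrite (IH z x), (IH z y). reflexivity.
Qed.

(* Along an edge of weight [w > 0]: 2|f x - f y| <= t w |f x - f y|^2 + 1/(w t). *)
Lemma edge_amgm t w u : 0 < t -> 0 < w -> 0 <= u -> 2 * u <= t * (w * (u * u)) + / w / t.
Proof.
  intros Ht Hw Hu.
  assert (E : t * (w * (u * u)) + / w / t - 2 * u = ((t * w) * u - 1)^2 / (t * w)) by (field; lra).
  assert (0 <= ((t * w) * u - 1)^2 / (t * w)).
  { apply Rmult_le_pos; [apply pow2_ge_0 | left; apply Rinv_0_lt_compat; nra]. }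
  lra.
Qed.

Lemma path_variation (f : X -> Cx) t x l : 0 < t -> edges_pos b x l ->
  2 * Cmod (Cminus (f x) (f (last l x)))
    <= t * fsum (Q_edge b f) (path_edges x l) + path_cost b x l / t.
Proof.
  intros Ht; revert x; induction l as [|y l IH]; intros x Hpos; cbn [path_edges path_cost] in *.
  - cbn [last]. rewrite Cmod_diag. cbn. unfold Rdiv. lra.
  - destruct Hpos as [Hxy Hpos]. rewrite last_cons_default, fsum_cons. specialize (IH _ Hpos).
    pose proof (Cmod_tri (f x) (f y) (f (last l y))).
    pose proof (edge_amgm t (b x y) (Cmod (Cminus (f x) (f y))) Ht Hxy (Cmod_nonneg _)) as Hedge.
    rewrite Cmod_sq in Hedge. change (Q_edge b f (x, y)) with (b x y * Cabs2 (Cminus (f x) (f y))).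
    replace ((/ b x y + path_cost b y l) / t) with (/ b x y / t + path_cost b y l / t) by (field; lra).
    lra.
Qed.

End PathEstimates.

Lemma path_exists {X : Type} (b : X -> X -> R) :
  connected b -> forall x y, exists l, is_path b x l y.
Proof.
  intros Hconn x y. destruct (classic (x = y)) as [<-|Hne]; [|exact (Hconn x y Hne)].
  exists []. split; [constructor; [intros [] | constructor] | split; reflexivity].
Qed.

Lemma dist_d_path {X : Type} (b : X -> X -> R) x y δ : connected b -> dist_d b x y < δ ->
  exists l, is_path b x l y /\ path_cost b x l < δ.
Proof.
  intros Hconn Hd. unfold dist_d, Rinf in Hd.
  set (E := fun r => exists l, is_path b x l y /\ - r = path_cost b x l) in Hd.
  apply NNPP; intros Hn.
  enough (Rsup E <= - δ) by lra.
  apply Rsup_le.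
  - destruct (path_exists b Hconn x y) as [l Hl]. exists (- path_cost b x l), l. split; [exact Hl | ring].
  - intros r [l [Hl Hr]]. destruct (Rle_dec r (-δ)) as [?|Hgt]; [assumption|].
    exfalso; apply Hn; exists l; split; [exact Hl | lra].
Qed.

Section ResistanceMetric.
Context {X : Type} (b : X -> X -> R) (c : X -> R).
Hypothesis b_connected : connected b.

Lemma Qt_nonneg (f : X -> Cx) : in_Dt b c f -> 0 <= Qt b c f.
Proof.
  intros [H1 H2]. unfold Qt.
  pose proof (nnsum_nonneg _ H1); pose proof (nnsum_nonneg _ H2); lra.
Qed.

Lemma diff_le_path (f : X -> Cx) t x l y :
  0 < t -> in_Dt b c f -> Qt b c f <= 1 -> is_path b x l y ->
  Cmod (Cminus (f x) (f y)) <= t + path_cost b x l / (2 * t).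
Proof.
  intros Ht [Hf1 Hf2] HQ [Hnd [Hpos <-]].
  pose proof (path_variation b f t x l Ht Hpos).
  pose proof (nnsum_ge _ _ Hf1 (path_edges_NoDup x l Hnd)).
  assert (0 <= nnsum (Q_pot c f)).
  { apply nnsum_nonneg; exact Hf2. }
  unfold Qt in HQ.
  assert (t * fsum (Q_edge b f) (path_edges x l) <= t * 2) by (apply Rmult_le_compat_l; lra).
  replace (path_cost b x l / (2 * t)) with (path_cost b x l / t / 2) by (field; lra).
  lra.
Qed.

Definition scale (s : R) (f : X -> Cx) : X -> Cx := fun z => (s * fst (f z), s * snd (f z)).

Lemma Cmod_scale s (f : X -> Cx) x y : 0 <= s ->
  Cmod (Cminus (scale s f x) (scale s f y)) = s * Cmod (Cminus (f x) (f y)).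
Proof.
  intros Hs. unfold Cmod.
  replace (Cabs2 (Cminus (scale s f x) (scale s f y))) with (s * s * Cabs2 (Cminus (f x) (f y)))
    by (unfold scale, Cabs2, Cminus; cbn; ring).
  rewrite sqrt_mult, sqrt_square by (nra || apply Cabs2_nonneg). reflexivity.
Qed.

Lemma scale_Dt s (f : X -> Cx) : in_Dt b c f ->
  in_Dt b c (scale s f) /\ Qt b c (scale s f) <= s * s * Qt b c f.
Proof.
  intros [H1 H2]. assert (Hs : 0 <= s * s) by nra.
  assert (B1 := fsum_le_scaled_nnsum (Q_edge b f) (Q_edge b (scale s f)) (s * s)
    (fun p => ltac:(unfold Q_edge, scale, Cabs2, Cminus; cbn; nra)) Hs H1).
  assert (B2 := fsum_le_scaled_nnsum (Q_pot c f) (Q_pot c (scale s f)) (s * s)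
    (fun p => ltac:(unfold Q_pot, scale, Cabs2; cbn; nra)) Hs H2).
  split; [split; eapply nnsum_finite_of_bound; eauto|].
  unfold Qt. apply nnsum_le in B1. apply nnsum_le in B2. nra.
Qed.

Definition rho_set (x y : X) : R -> Prop :=
  fun r => exists f, in_Dt b c f /\ Qt b c f <= 1 /\ r = Cmod (Cminus (f x) (f y)).

(* The constant function 0 shows that the set defining rho is nonempty. *)
Lemma rho_set_nonempty x y : exists r, rho_set x y r.
Proof.
  assert (Hedge : forall l, NoDup l -> fsum (Q_edge b (fun _ => (0, 0))) l <= 0)
    by (intros l _; apply fsum_nonpos; intros p; unfold Q_edge, Cabs2, Cminus; cbn; lra).
  assert (Hpot : forall l, NoDup l -> fsum (Q_pot c (fun _ => (0, 0))) l <= 0)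
    by (intros l _; apply fsum_nonpos; intros p; unfold Q_pot, Cabs2; cbn; lra).
  eexists (Cmod (Cminus (0, 0) (0, 0))), (fun _ => (0, 0)).
  split; [split; eapply nnsum_finite_of_bound; eauto|split; [|reflexivity]].
  unfold Qt. apply nnsum_le in Hedge. apply nnsum_le in Hpot. lra.
Qed.

(* By connectedness, [diff_le_path] bounds the set defining rho. *)
Lemma rho_set_bounded x y : exists M, forall r, rho_set x y r -> r <= M.
Proof.
  destruct (path_exists b b_connected x y) as [l Hl].
  exists (1 + path_cost b x l / (2 * 1)). intros r [f [Hf [HQ ->]]].
  apply diff_le_path; auto; lra.
Qed.

Lemma rho_ge (f : X -> Cx) x y : in_Dt b c f -> Qt b c f <= 1 ->
  Cmod (Cminus (f x) (f y)) <= dist_rho b c x y.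
Proof. intros Hf HQ. apply Rsup_ub; [exists f; auto | apply rho_set_bounded]. Qed.

Lemma rho_le_path x l y t : 0 < t -> is_path b x l y ->
  dist_rho b c x y <= t + path_cost b x l / (2 * t).
Proof.
  intros Ht Hl. apply Rsup_le; [apply rho_set_nonempty|].
  intros r [f [Hf [HQ ->]]]. apply diff_le_path; auto.
Qed.

Lemma diff_le_rho (f : X -> Cx) lam x y : in_Dt b c f -> 0 < lam -> Qt b c f <= lam ->
  Cmod (Cminus (f x) (f y)) <= sqrt lam * dist_rho b c x y.
Proof.
  intros Hf Hlam HQ.
  assert (Hsq : 0 < sqrt lam) by (apply sqrt_lt_R0; exact Hlam).
  set (s := / sqrt lam).
  assert (Hss : s * s = / lam) by (unfold s; rewrite <- Rinv_mult, sqrt_sqrt; lra).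
  destruct (scale_Dt s f Hf) as [Hg HQg].
  assert (HQ1 : Qt b c (scale s f) <= 1).
  { eapply Rle_trans; [exact HQg|]. rewrite Hss.
    apply Rmult_le_reg_l with lam; [exact Hlam|].
    rewrite <- Rmult_assoc, Rinv_r by lra. nra. }
  pose proof (rho_ge _ x y Hg HQ1) as Hrho. rewrite Cmod_scale in Hrho by (unfold s; left; apply Rinv_0_lt_compat, Hsq).
  replace (Cmod (Cminus (f x) (f y))) with (sqrt lam * (s * Cmod (Cminus (f x) (f y))))
    by (unfold s; field; lra).
  apply Rmult_le_compat_l; lra.
Qed.

End ResistanceMetric.

(* (A) => (B): rho(x,y) <= t + d(x,y)/(2t); take t = eps/2 and d(x,y) < eps^2/2. *)
Lemma A_implies_B {X : Type} (b : X -> X -> R) (c : X -> R) : connected b ->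
  totally_bounded (dist_d b) -> totally_bounded (dist_rho b c).
Proof.
  intros Hconn HA eps Heps.
  destruct (HA (eps * eps / 2)) as [F HF]; [nra|].
  exists F. intros x. destruct (HF x) as [y [Hy Hd]]. exists y. split; [exact Hy|].
  destruct (dist_d_path b x y _ Hconn Hd) as [l [Hl Hcost]].
  eapply Rle_lt_trans; [apply (rho_le_path b c x l y (eps / 2)); [lra | exact Hl]|].
  enough (path_cost b x l / (2 * (eps / 2)) < eps / 2) by lra.
  apply Rmult_lt_reg_r with eps; [exact Heps|]. unfold Rdiv. field_simplify; lra.
Qed.

(* (B) => (D): a function of finite energy is Lipschitz for the totally bounded rho. *)
Lemma B_implies_D {X : Type} (b : X -> X -> R) (c : X -> R) : connected b ->
  totally_bounded (dist_rho b c) -> forall f, in_Dt b c f -> bounded_fun f.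
Proof.
  intros Hconn HB f Hf. pose proof (Qt_nonneg b c f Hf).
  apply (bounded_of_totally_bounded (dist_rho b c) f (sqrt (Qt b c f + 1)));
    [apply sqrt_pos | | exact HB].
  intros x y. apply diff_le_rho; [exact Hconn | exact Hf | lra | lra].
Qed.

(* Without potential, the distance to a point for a metric s intrinsic w.r.t. a
   measure of total mass <= Mm has energy <= Mm: its edge differences are
   bounded by s itself (triangle inequality), whose energy at x is <= 2 m(x). *)
Lemma intrinsic_distance_energy {X : Type} (b : X -> X -> R) (c : X -> R) m s Mm y0 :
  (forall x, c x = 0) -> (forall x y, 0 <= b x y) -> is_metric s -> intrinsic b m s ->
  (forall xs, NoDup xs -> fsum m xs <= Mm) ->
  in_Dt b c (fun z => (s z y0, 0)) /\ Qt b c (fun z => (s z y0, 0)) <= Mm.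
Proof.
  intros Hc0 Hb0 [Hs0 [_ [Hsym Htri]]] Hint Hm.
  set (g := fun z => (s z y0, 0)).
  assert (Hedge : forall p, Q_edge b g p <= b (fst p) (snd p) * s (fst p) (snd p) ^ 2).
  { intros [u v]; unfold Q_edge, g, Cabs2, Cminus; cbn.
    apply Rmult_le_compat_l; [apply Hb0|].
    pose proof (Htri u v y0). pose proof (Htri v u y0). rewrite (Hsym v u) in *.
    pose proof (Hs0 u v). nra. }
  assert (Hrow : forall x l, NoDup l -> fsum (fun y => Q_edge b g (x, y)) l <= 2 * m x).
  { intros x l Hl. destruct (Hint x) as [Hfin Hle].
    eapply Rle_trans; [apply (fsum_le _ (fun y => b x y * s x y ^ 2)); intros y; apply (Hedge (x, y))|].
    pose proof (nnsum_ge _ l Hfin Hl). lra. }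
  assert (HE : forall L, NoDup L -> fsum (Q_edge b g) L <= 2 * Mm).
  { apply pair_sum_le_rows with (H := fun x => 2 * m x).
    - intros p; apply Rmult_le_pos; [apply Hb0 | apply Cabs2_nonneg].
    - intros x; exact (nnsum_finite_of_bound _ _ (Hrow x)).
    - intros x; exact (nnsum_le _ _ (Hrow x)).
    - intros xs Hxs. rewrite fsum_scal. specialize (Hm xs Hxs). lra. }
  assert (Hpot : forall L, NoDup L -> fsum (Q_pot c g) L <= 0)
    by (intros L _; apply fsum_nonpos; intros p; unfold Q_pot; rewrite Hc0; lra).
  split; [split; eapply nnsum_finite_of_bound; eauto|].
  unfold Qt. apply nnsum_le in HE. apply nnsum_le in Hpot. lra.
Qed.

(* (B) => (C) when c = 0: every such s is dominated by a multiple of rho. *)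
Lemma B_implies_C {X : Type} (b : X -> X -> R) (c : X -> R) :
  (forall x, c x = 0) -> weighted_graph b c -> connected b ->
  totally_bounded (dist_rho b c) ->
  forall (m : X -> R) (s : X -> X -> R),
    is_measure m -> finite_measure m -> is_metric s -> intrinsic b m s -> totally_bounded s.
Proof.
  intros Hc0 [Hb0 _] Hconn HB m s _ [Mm HMm] Hs Hint.
  assert (Hm : forall xs, NoDup xs -> fsum m xs <= Mm) by (intros xs Hxs; apply HMm; exists xs; auto).
  assert (HMm0 : 0 <= Mm) by (apply (Hm []); constructor).
  apply (totally_bounded_dominated s (dist_rho b c) (sqrt (Mm + 1))); [apply sqrt_lt_R0; lra | | exact HB].
  intros x y.
  destruct (intrinsic_distance_energy b c m s Mm y Hc0 Hb0 Hs Hint Hm) as [Hg HQg].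
  pose proof (diff_le_rho b c Hconn _ (Mm + 1) x y Hg ltac:(lra) ltac:(lra)) as Hd.
  destruct Hs as [Hs0 [Hs1 _]]. cbn beta in Hd.
  rewrite Cmod_real, (proj2 (Hs1 y y) eq_refl), Rminus_0_r, Rabs_pos_eq in Hd by apply Hs0.
  exact Hd.
Qed.

(* On a countable graph there are positive vertex weights w with
   sum_{x,y} b(x,y) w(x)^2 <= 2: take w(x) = 2^-n(x) / (1 + deg x), where n
   enumerates the vertices, so that w(x)^2 deg(x) <= 2^-n(x). *)
Lemma degree_weights {X : Type} (b : X -> X -> R) (c : X -> R) :
  countably_infinite X -> weighted_graph b c ->
  exists w : X -> R, (forall x, 0 < w x) /\
    forall L, NoDup L -> fsum (fun p => b (fst p) (snd p) * (w (fst p) * w (fst p))) L <= 2.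
Proof.
  intros [e [_ esurj]] [Hb0 [_ [_ [Hbf _]]]].
  destruct (choice (fun x n => e n = x) esurj) as [idx Hidx].
  set (deg := fun x => nnsum (b x)).
  assert (Hdeg : forall x, 0 <= deg x) by (intros x; apply nnsum_nonneg, Hbf).
  set (w := fun x => (/2)^(idx x) * / (1 + deg x)).
  assert (Hw : forall x, 0 < w x).
  { intros x. apply Rmult_lt_0_compat; [apply pow_lt; lra|].
    apply Rinv_0_lt_compat. specialize (Hdeg x); lra. }
  assert (Hwdeg : forall x, w x * w x * deg x <= (/2)^(idx x)).
  { intros x. unfold w. set (a := (/2)^(idx x)). set (q := / (1 + deg x)).
    specialize (Hdeg x).
    assert (Ha : 0 < a <= 1)
      by (split; [apply pow_lt; lra | unfold a; rewrite <- (pow1 (idx x)); apply pow_incr; lra]).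
    assert (Hq : q * (1 + deg x) = 1) by (unfold q; field; lra).
    assert (0 < q) by (unfold q; apply Rinv_0_lt_compat; lra).
    assert (q * deg x <= 1) by nra. assert (q <= 1) by nra.
    assert (q * (q * deg x) <= 1) by nra.
    replace (a * q * (a * q) * deg x) with ((a * a) * (q * (q * deg x))) by ring. nra. }
  exists w. split; [exact Hw|].
  assert (Hrow : forall x l, NoDup l -> fsum (fun y => b x y * (w x * w x)) l <= (/2)^(idx x)).
  { intros x l Hl. eapply Rle_trans; [|apply Hwdeg].
    apply (fsum_le_scaled_nnsum (b x)); [intros y; lra | specialize (Hw x); nra | apply Hbf | exact Hl]. }
  apply pair_sum_le_rows with (H := fun x => (/2)^(idx x)).
  - intros p; apply Rmult_le_pos; [apply Hb0 | specialize (Hw (fst p)); nra].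
  - intros x; exact (nnsum_finite_of_bound _ _ (Hrow x)).
  - intros x; exact (nnsum_le _ _ (Hrow x)).
  - intros xs Hxs. rewrite <- (fsum_map (fun n => (/2)^n) idx). apply fsum_geom_le.
    apply Injective_map_NoDup; [|exact Hxs].
    intros x y Hxy. rewrite <- (Hidx x), <- (Hidx y), Hxy. reflexivity.
Qed.

(* The oscillation of f, made a genuine metric by adding w(x) + w(y) off the diagonal. *)
Definition separated_metric {X : Type} (f : X -> Cx) (w : X -> R) (x y : X) : R :=
  Cmod (Cminus (f x) (f y)) + (if excluded_middle_informative (x = y) then 0 else w x + w y).

Lemma separated_metric_is_metric {X : Type} (f : X -> Cx) (w : X -> R) :
  (forall x, 0 < w x) -> is_metric (separated_metric f w).
Proof.
  intros Hw. unfold separated_metric. split; [|split; [|split]].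
  - intros x y. pose proof (Cmod_nonneg (Cminus (f x) (f y))). pose proof (Hw x); pose proof (Hw y).
    destruct (excluded_middle_informative (x = y)); lra.
  - intros x y; split.
    + intros H. destruct (excluded_middle_informative (x = y)); [assumption|].
      pose proof (Hw x); pose proof (Hw y); pose proof (Cmod_nonneg (Cminus (f x) (f y))). lra.
    + intros <-. rewrite Cmod_diag. destruct (excluded_middle_informative (x = x)); [lra | congruence].
  - intros x y. rewrite Cmod_sym.
    destruct (excluded_middle_informative (x = y)), (excluded_middle_informative (y = x));
      subst; try congruence; lra.
  - intros x y z. pose proof (Cmod_tri (f x) (f y) (f z)).
    pose proof (Hw x); pose proof (Hw y); pose proof (Hw z).
    destruct (excluded_middle_informative (x = z)), (excluded_middle_informative (x = y)),
      (excluded_middle_informative (y = z)); subst; try congruence; lra.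
Qed.

(* Its energy is at most twice that of f plus the (swapped) weight sums:
   b (u + v)^2 <= 2 b u^2 + 4 b w(x)^2 + 4 b w(y)^2. *)
Lemma separated_metric_energy {X : Type} (b : X -> X -> R) (f : X -> Cx) (w : X -> R) :
  (forall x y, 0 <= b x y) -> (forall x y, b x y = b y x) -> nnsum_finite (Q_edge b f) ->
  (forall L, NoDup L -> fsum (fun p => b (fst p) (snd p) * (w (fst p) * w (fst p))) L <= 2) ->
  forall L, NoDup L ->
    fsum (fun p => b (fst p) (snd p) * separated_metric f w (fst p) (snd p) ^ 2) L
      <= 2 * nnsum (Q_edge b f) + 16.
Proof.
  intros Hb0 Hbs Hf Hw L HL.
  set (W := fun p : X * X => b (fst p) (snd p) * (w (fst p) * w (fst p))).
  assert (Hpoint : forall x y, b x y * separated_metric f w x y ^ 2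
                     <= 2 * Q_edge b f (x, y) + 4 * W (x, y) + 4 * W (y, x)).
  { intros x y. unfold W, Q_edge, separated_metric; cbn [fst snd]. rewrite (Hbs y x), <- Cmod_sq.
    set (u := Cmod (Cminus (f x) (f y))). pose proof (Cmod_nonneg (Cminus (f x) (f y))).
    set (v := if excluded_middle_informative (x = y) then 0 else w x + w y).
    assert (Hv : v * v <= 2 * (w x * w x) + 2 * (w y * w y)).
    { pose proof (pow2_ge_0 (w x - w y)). pose proof (pow2_ge_0 (w x + w y)).
      unfold v; destruct (excluded_middle_informative (x = y)); nra. }
    assert (Huv : (u + v) ^ 2 <= 2 * (u * u) + 2 * (v * v)) by (pose proof (pow2_ge_0 (u - v)); nra).
    pose proof (Hb0 x y). nra. }
  eapply Rle_trans; [apply (fsum_le _ (fun p => 2 * Q_edge b f p + 4 * W p + 4 * W (snd p, fst p)));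
    intros [x y]; apply Hpoint|].
  rewrite !fsum_plus, !fsum_scal.
  pose proof (nnsum_ge _ _ Hf HL). pose proof (Hw L HL). pose proof (pair_sum_swap W 2 Hw L HL).
  unfold W in *; lra.
Qed.

Lemma intrinsic_measure_of_energy {X : Type} (b : X -> X -> R) (s : X -> X -> R) M :
  (forall L, NoDup L -> fsum (fun p => b (fst p) (snd p) * s (fst p) (snd p) ^ 2) L <= M) ->
  exists m, is_measure m /\ finite_measure m /\ intrinsic b m s.
Proof.
  intros HM. destruct (rows_le_pair_sum _ M HM) as [Hrow Htot]. cbn [fst snd] in Hrow, Htot.
  exists (fun x => / 2 * nnsum (fun y => b x y * s x y ^ 2)).
  assert (Hfin : forall x, nnsum_finite (fun y => b x y * s x y ^ 2))
    by (intros x; exact (nnsum_finite_of_bound _ _ (Hrow x))).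
  split; [|split].
  - intros x. pose proof (nnsum_nonneg _ (Hfin x)). lra.
  - apply nnsum_finite_of_bound with (/ 2 * M). intros xs Hxs.
    rewrite fsum_scal. specialize (Htot xs Hxs). lra.
  - intros x. split; [exact (Hfin x) | apply Rle_refl].
Qed.

(* (C) => (D): apply (C) to the separated metric of f, which dominates its oscillation. *)
Lemma C_implies_D {X : Type} (b : X -> X -> R) (c : X -> R) :
  countably_infinite X -> weighted_graph b c ->
  (forall (m : X -> R) (s : X -> X -> R),
     is_measure m -> finite_measure m -> is_metric s -> intrinsic b m s -> totally_bounded s) ->
  forall f, in_Dt b c f -> bounded_fun f.
Proof.
  intros HX Hg HC f [Hf _].
  destruct (degree_weights b c HX Hg) as [w [Hw Hwb]].
  destruct Hg as [Hb0 [Hbs _]].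
  destruct (intrinsic_measure_of_energy b (separated_metric f w) _
              (separated_metric_energy b f w Hb0 Hbs Hf Hwb)) as [m [Hm [Hmf Hint]]].
  apply (bounded_of_totally_bounded (separated_metric f w) f 1); [lra | |].
  - intros x y. unfold separated_metric. pose proof (Hw x); pose proof (Hw y).
    destruct (excluded_middle_informative (x = y)); lra.
  - exact (HC m _ Hm Hmf (separated_metric_is_metric f w Hw) Hint).
Qed.

Theorem mainTheorem8 (X : Type) (b : X -> X -> R) (c : X -> R)
  (HX : countably_infinite X) (Hg : weighted_graph b c) (Hconn : connected b) :
  let A := totally_bounded (dist_d b) in
  let B := totally_bounded (dist_rho b c) in
  let C := forall (m : X -> R) (s : X -> X -> R),
             is_measure m -> finite_measure m -> is_metric s -> intrinsic b m s ->
             totally_bounded s in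
  let D := forall f : X -> Cx, in_Dt b c f -> bounded_fun f in
  (A -> B) /\ (B -> D) /\ ((forall x, c x = 0) -> (B -> C) /\ (C -> D)).
Proof.
  intros A B C D. split; [|split].
  - exact (A_implies_B b c Hconn).
  - exact (B_implies_D b c Hconn).
  - intros Hc0. split.
    + exact (B_implies_C b c Hc0 Hg Hconn).
    + exact (C_implies_D b c HX Hg).
Qed.
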